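(* Let $\mathcal T$ be a transducer with $n\ge1$ states. The following are equivalent: (1) $\mathcal T$ is not zero-avoiding (with any bound $k\in\mathbb N_0$); (2) $\mathcal T$ has a computation $P$ with $d_{max}(P)\ge n$ and $d(P)=0$; (3) $\mathcal T$ has a computation $P$ of the form $P=BC_1AC_2D$, for some paths $B,C_1,A,C_2,D$, where $C_1,C_2$ are cycles with $d(C_1)\,d(C_2)<0$.
   Context: A transducer is a quintuple $\mathcal T=(Q,\Sigma,E,I,F)$ with finite state set $Q$, finite alphabet $\Sigma$, finite transition set $E\subseteq Q\times\{x/y : x,y\in\Sigma\cup\{\lambda\}\}\times Q$ ($\lambda$ the empty word), nonempty initial set $I\subseteq Q$, final set $F\subseteq Q$. A path is a finite sequence of consecutive transitions; its label $x_1\cdots x_\ell/y_1\cdots y_\ell$ is formed by concatenating input parts and output parts. A cycle is a path whose first and last states coincide. A computation is a path that is empty or starts at an initial state. For a path $P$ with label $u/v$, $d(P)=|u|-|v|$, and $d_{max}(P)=\max\{|d(Q)| : Q\text{ a prefix of }P\}$ (prefixes being initial segments of transitions, including the empty path). $\mathcal T$ is zero-avoiding with bound $k\in\mathbb N_0$ if for every computation $P$ of $\mathcal T$, $d_{max}(P)>k$ implies $d(P)\neq0$; $\mathcal T$ is zero-avoiding if it is zero-avoiding with some bound $k\in\mathbb N_0$. *)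

From HB Require Import structures.
From mathcomp Require Import all_boot all_order all_algebra.
Set Implicit Arguments. Unset Strict Implicit. Unset Printing Implicit Defensive.
Import Order.TTheory GRing.Theory Num.Theory.

(* A transition (p, x, y, q) : p --x/y--> q, with None standing for the empty word lambda. *)
Definition transition (Q S : finType) : finType :=
  (Q * option S * option S * Q)%type.

Section Transducer.
Variables Q S : finType.

Definition src (t : transition Q S) : Q := t.1.1.1.
Definition inp (t : transition Q S) : option S := t.1.1.2.
Definition outp (t : transition Q S) : option S := t.1.2.
Definition tgt (t : transition Q S) : Q := t.2.

Record transducer := Transducer {
  trans : {set transition Q S};
  init  : {set Q};
  final : {set Q} }.

Variable T : transducer.

Definition is_path (P : seq (transition Q S)) : bool :=
  all (fun t => t \in trans T) P &&
  match P with
  | [::] => true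
  | t :: P' => path (fun t1 t2 => tgt t1 == src t2) t P'
  end.

Definition is_cycle (P : seq (transition Q S)) : bool :=
  is_path P &&
  match P with
  | [::] => false
  | t :: P' => src t == tgt (last t P')
  end.

Definition computation (P : seq (transition Q S)) : bool :=
  is_path P &&
  match P with
  | [::] => true
  | t :: _ => src t \in init T
  end.

Definition in_len (P : seq (transition Q S)) : nat :=
  count (fun t => inp t != None) P.
Definition out_len (P : seq (transition Q S)) : nat :=
  count (fun t => outp t != None) P.

Definition dd (P : seq (transition Q S)) : int :=
  (in_len P)%:Z - (out_len P)%:Z.

Definition dmax (P : seq (transition Q S)) : nat :=
  \max_(i < (size P).+1) `|dd (take i P)|%N.

Definition zero_avoiding_with_bound (k : nat) : Prop :=
  forall P, computation P -> k < dmax P -> dd P != 0.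

Definition zero_avoiding : Prop := exists k : nat, zero_avoiding_with_bound k.

End Transducer.

(* Let D(i) be d of the prefix of length i of a computation; D changes by at most 1
   per transition.  (1) -> (2) is the bound k = n - 1.  (2) -> (3): if |D(i)| >= n
   while D vanishes at both ends, then on each side of i the walk D crosses n + 1
   consecutive levels; the states at the first hitting times of these levels cannot
   all differ, which cuts out a cycle before i and one after i with d of opposite
   signs.  (3) -> (1): pumping C1 makes |d| after the C1 block exceed any given k
   with the sign of d(C1); pumping C2 then drives d to the sign of d(C2), and by
   discrete continuity a prefix in between is a computation with d = 0 and
   dmax > k. *)

From HB Require Import structures.
From mathcomp Require Import all_boot all_order all_algebra.
From mathcomp Require Import zify.
From Stdlib Require Import Classical.
Set Implicit Arguments. Unset Strict Implicit. Unset Printing Implicit Defensive.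
Import Order.TTheory GRing.Theory Num.Theory.
Local Open Scope ring_scope.

Definition unit_steps (f : nat -> int) := forall i, `|f i.+1 - f i| <= 1.

Lemma unit_stepsN (f : nat -> int) : unit_steps f -> unit_steps (fun i => - f i).
Proof. by move=> Hf i; rewrite -opprD normrN. Qed.

Lemma unit_steps_ivt (f : nat -> int) (u v : nat) (c : int) : unit_steps f ->
  (u <= v)%N -> f u <= c <= f v -> exists p, [/\ (u <= p <= v)%N & f p = c].
Proof.
move=> Hf /subnKC <-; elim: (v - u)%N => [|d IH] /andP[fu_le_c c_le_fv].
  by exists u; split; [lia | rewrite addn0 in c_le_fv; lia].
have [c_le_fd|fd_lt_c] := lerP c (f (u + d)%N).
  by have [p [Hp <-]] := IH (introT andP (conj fu_le_c c_le_fd)); exists p; split; lia.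
exists (u + d.+1)%N; split; first lia.
by have := Hf (u + d)%N; rewrite addnS in c_le_fv *; lia.
Qed.

Lemma unit_steps_root (f : nat -> int) (u v : nat) : unit_steps f ->
  (u <= v)%N -> f u * f v <= 0 -> exists p, [/\ (u <= p <= v)%N & f p = 0].
Proof.
move=> Hf Huv Hsign.
have [rise|fall] : f u <= 0 <= f v \/ - f u <= 0 <= - f v by nia.
  exact: unit_steps_ivt rise.
have [p [Hp /eqP]] := unit_steps_ivt (unit_stepsN Hf) Huv fall.
by rewrite oppr_eq0 => /eqP; exists p.
Qed.

Lemma unit_steps_repeat_rise (Q : finType) (st : nat -> Q) (D : nat -> int) (a b : nat) :
  unit_steps D -> (a <= b)%N -> #|Q|%:Z <= D b - D a ->
  exists p q, [/\ (a <= p < q)%N, (q <= b)%N, st p = st q & D p < D q].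
Proof.
move=> HD Hab rise.
(* The first hitting times of the levels [D a + j], [j <= #|Q|], increase with [j];
   two of these [#|Q|.+1] times must carry the same state. *)
have hit (j : 'I_#|Q|.+1) : exists p, (a <= p <= b)%N && (D p == D a + j%:Z).
  have [p [Hp Dp]] : exists p, [/\ (a <= p <= b)%N & D p = D a + j%:Z].
    by apply: unit_steps_ivt => //; have := ltn_ord j; lia.
  by exists p; rewrite Hp Dp eqxx.
pose first j := ex_minn (hit j).
have firstP j : [/\ (a <= first j <= b)%N, D (first j) = D a + j%:Z &
    forall p, (a <= p)%N -> D p = D a + j%:Z -> (first j <= p)%N].
  rewrite /first; case: ex_minnP => m /andP[Hm /eqP Dm] min_m.
  split=> // p Hap Dp.
  have [Hpb|] := leqP p b; last lia.
  by apply: min_m; rewrite Dp eqxx andbT; apply/andP.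
have first_mono (j j' : 'I_#|Q|.+1) : (j < j')%N -> (first j < first j')%N.
  move=> Hjj'; have [Hj Dj min_j] := firstP j; have [Hj' Dj' _] := firstP j'.
  have [p [Hp Dp]] : exists p, [/\ (a <= p <= first j')%N & D p = D a + j%:Z].
    by apply: unit_steps_ivt; [| lia | apply/andP; split; lia].
  have := min_j p ltac:(lia) Dp; suff : first j != first j' by lia.
  by apply/eqP => Ej; move: Dj Dj'; rewrite Ej => ->; lia.
have /injectivePn[j [j' Hjj' Est]] : ~~ injectiveb (fun j : 'I_#|Q|.+1 => st (first j)).
  by apply/injectiveP => /leq_card; rewrite card_ord ltnn.
wlog lt_jj' : j j' Hjj' Est / (j < j')%N.
  move=> gen; case: (ltngtP j j') => [|lt_j'j|/val_inj eq_jj']; first exact: gen.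
    by apply: (gen j' j); rewrite // eq_sym.
  by rewrite eq_jj' eqxx in Hjj'.
have [Hj Dj _] := firstP j; have [Hj' Dj' _] := firstP j'.
by exists (first j), (first j'); split=> //; [have := first_mono _ _ lt_jj'; lia | lia | lia].
Qed.

Lemma unit_steps_repeat (Q : finType) (st : nat -> Q) (D : nat -> int) (a b : nat) :
  unit_steps D -> (a <= b)%N -> #|Q|%:Z <= `|D b - D a| ->
  exists p q, [/\ (a <= p < q)%N, (q <= b)%N, st p = st q & 0 < (D q - D p) * (D b - D a)].
Proof.
move=> HD Hab change.
have Q_gt0 : (0 < #|Q|)%N by apply/card_gt0P; exists (st 0%N).
have [rise|fall] := lerP (D a) (D b).
  have [p [q [Hpq Hqb Est Dpq]]] := unit_steps_repeat_rise st HD Hab ltac:(lia).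
  by exists p, q; split=> //; apply: mulr_gt0; lia.
have [p [q [Hpq Hqb Est Dpq]]] := unit_steps_repeat_rise st (unit_stepsN HD) Hab ltac:(lia).
by exists p, q; split=> //; rewrite -mulrNN; apply: mulr_gt0; lia.
Qed.

Lemma sign_add_large_multiple (x c : int) (m : nat) : c != 0 ->
  m%:Z < `|x + (m + absz x).+1%:Z * c| /\ 0 < (x + (m + absz x).+1%:Z * c) * c.
Proof.
move=> c_neq0; have [c_gt0|c_lt0] : 0 < c \/ c < 0 by lia.
all: split; nia.
Qed.

Section Paths.
Variables (Q S : finType) (T : transducer Q S).
Notation tr := (transition Q S).

Lemma dd_cat (x y : seq tr) : dd (x ++ y) = dd x + dd y.
Proof. by rewrite /dd /in_len /out_len !count_cat; lia. Qed.

Lemma unit_steps_dd_take (P : seq tr) : unit_steps (fun i => dd (take i P)).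
Proof.
move=> i; have [lt_iP|le_Pi] := ltnP i (size P); last first.
  by rewrite !take_oversize ?subrr // leqW.
case: P lt_iP => // t P lt_iP; rewrite (take_nth t lt_iP) -cats1 dd_cat addrC addKr.
by rewrite /dd /in_len /out_len /=; case: (inp _ != None); case: (outp _ != None).
Qed.

Definition joins (x y : seq tr) : bool :=
  if x is a :: x' then (if y is b :: _ then tgt (last a x') == src b else true) else true.

Lemma is_path_cat (x y : seq tr) :
  is_path T (x ++ y) = [&& is_path T x, is_path T y & joins x y].
Proof.
rewrite /is_path all_cat; case: x => [|a x] /=; first by case: y => [|b y]; rewrite !andbT.
case: y => [|b y] /=; first by rewrite cats0 !andbT.
rewrite cat_path /=.
by case: (a \in _) (all _ x) (b \in _) (all _ y) (path _ a x) (_ == _) (path _ b y)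
  => [] [] [] [] [] [] [].
Qed.

Lemma is_path_take (P : seq tr) i : is_path T P -> is_path T (take i P).
Proof. by rewrite -{1}(cat_take_drop i P) is_path_cat => /and3P[]. Qed.

Lemma is_path_drop (P : seq tr) i : is_path T P -> is_path T (drop i P).
Proof. by rewrite -{1}(cat_take_drop i P) is_path_cat => /and3P[]. Qed.

Lemma computation_take (P : seq tr) i : computation T P -> computation T (take i P).
Proof.
case/andP=> HP; rewrite /computation is_path_take //.
by case: P HP => [|t P] //; case: i.
Qed.

Lemma leq_dmax (P : seq tr) i : (i <= size P)%N -> (`|dd (take i P)| <= dmax P)%N.
Proof.
move=> Hi; exact: (@leq_bigmax _ (fun j : 'I_(size P).+1 => `|dd (take j P)|%N)
  (Ordinal (n := (size P).+1) Hi)).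
Qed.

Lemma dmax_attained (P : seq tr) : exists2 i, (i <= size P)%N & dmax P = `|dd (take i P)|%N.
Proof.
rewrite /dmax; have [i ->] := @bigop.eq_bigmax _ (fun j : 'I_(size P).+1 => `|dd (take j P)|%N)
  ltac:(by rewrite card_ord).
by exists i; rewrite // -ltnS.
Qed.

Definition state_at (t0 : tr) (P : seq tr) (i : nat) : Q :=
  if i is i'.+1 then tgt (nth t0 P i') else src t0.

Lemma src_nth_state_at (t0 : tr) (P' : seq tr) i :
  is_path T (t0 :: P') -> (i < size (t0 :: P'))%N ->
  src (nth t0 (t0 :: P') i) = state_at t0 (t0 :: P') i.
Proof.
case: i => [//|i] /andP[_ /pathP step] lt_iP.
by apply/esym/eqP; apply: step.
Qed.

Lemma is_cycle_segment (t0 : tr) (P' : seq tr) p q :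
  is_path T (t0 :: P') -> (p < q <= size (t0 :: P'))%N ->
  state_at t0 (t0 :: P') p = state_at t0 (t0 :: P') q ->
  is_cycle T (drop p (take q (t0 :: P'))).
Proof.
set P := t0 :: P'; move=> HP /andP[lt_pq le_qP] Est.
rewrite /is_cycle is_path_drop ?is_path_take //.
have size_seg : size (drop p (take q P)) = (q - p)%N by rewrite size_drop size_takel.
have nth_seg i : (i < q - p)%N -> nth t0 (drop p (take q P)) i = nth t0 P (p + i).
  by move=> Hi; rewrite nth_drop nth_take //; lia.
case Eseg: (drop p (take q P)) size_seg nth_seg => [|c C] size_seg nth_seg.
  by move: size_seg => /=; lia.
have -> : last c C = nth t0 P q.-1.
  by rewrite -[last c C]/(last t0 (c :: C)) -nth_last nth_seg size_seg; [congr nth; lia | lia].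
have -> : c = nth t0 P p by rewrite -[p]addn0 -(nth_seg 0%N) //; lia.
rewrite src_nth_state_at //; last exact: leq_trans lt_pq le_qP.
rewrite -/P Est; case: q {le_qP Est Eseg size_seg nth_seg} lt_pq => [//|q _].
exact: eqxx.
Qed.

Lemma computation_cycle_twice (X C Y : seq tr) : is_cycle T C ->
  computation T (X ++ C ++ Y) -> computation T (X ++ C ++ C ++ Y).
Proof.
case: C => [//|c C] /andP[HC Hcyc] /andP[HP Hinit].
apply/andP; split; last by case: X {HP} Hinit.
move: HP; rewrite !is_path_cat => /and3P[HX /and3P[_ HY HCY] HXC].
rewrite HX HC HY HCY /= eq_sym Hcyc.
by case: X {HX Hinit} HXC.
Qed.

Lemma computation_pump (X C Y : seq tr) m : is_cycle T C ->
  computation T (X ++ C ++ Y) -> computation T (X ++ flatten (nseq m.+1 C) ++ Y).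
Proof.
move=> HC HP; elim: m => [|m IH]; first by rewrite /= cats0.
by move: IH => /=; rewrite -!catA; apply: computation_cycle_twice.
Qed.

Lemma dd_flatten_nseq (C : seq tr) m : dd (flatten (nseq m C)) = m%:Z * dd C.
Proof. by elim: m => [|m IH]; rewrite ?mul0r //= dd_cat IH; lia. Qed.

Definition zero_computation_beyond (n : nat) : Prop :=
  exists P, computation T P /\ (n <= dmax P)%N /\ dd P = 0.

Definition has_opposite_cycles : Prop :=
  exists B C1 A C2 D : seq tr,
    [/\ computation T (B ++ C1 ++ A ++ C2 ++ D),
        is_path T B, is_path T A, is_path T D &
        [/\ is_cycle T C1, is_cycle T C2 & dd C1 * dd C2 < 0]].

Lemma not_zero_avoiding_zero_computation n :
  ~ zero_avoiding T -> zero_computation_beyond n.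
Proof.
move=> not_za; apply: NNPP => no_zero; apply: not_za; exists n.-1 => P HP Hdmax.
by apply/eqP => dP0; apply: no_zero; exists P; split => //; split => //; lia.
Qed.

Lemma opposite_cycles_not_zero_avoiding : has_opposite_cycles -> ~ zero_avoiding T.
Proof.
move=> [B [C1 [A [C2 [D [HP _ _ _ [HC1 HC2 opposite]]]]]]] [k Hk].
pose a := (k + absz (dd B))%N; pose X := dd B + a.+1%:Z * dd C1.
pose b := absz (X + dd A); pose Y := X + dd A + b.+1%:Z * dd C2.
pose P := (B ++ flatten (nseq a.+1 C1)) ++ (A ++ flatten (nseq b.+1 C2)) ++ D.
have HP' : computation T P.
  have := computation_pump a HC1 HP; rewrite 2!catA => /(computation_pump b HC2).
  by rewrite /P -!catA.
pose u := size (B ++ flatten (nseq a.+1 C1)).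
pose v := (u + size (A ++ flatten (nseq b.+1 C2)))%N.
have Du : dd (take u P) = X by rewrite /P take_size_cat // dd_cat dd_flatten_nseq.
have Dv : dd (take v P) = Y.
  rewrite /P catA take_size_cat; last by rewrite size_cat.
  by rewrite (dd_cat (B ++ _)) (dd_cat B) (dd_cat A) !dd_flatten_nseq addrA.
have [dC1_neq0 dC2_neq0] : dd C1 != 0 /\ dd C2 != 0.
  by split; apply/eqP => d0; rewrite d0 ?mul0r ?mulr0 in opposite.
have [X_gt_k X_sign] : k%:Z < `|X| /\ 0 < X * dd C1 := sign_add_large_multiple _ _ dC1_neq0.
have Y_sign : 0 < Y * dd C2 := (sign_add_large_multiple (X + dd A) 0 dC2_neq0).2.
have XY : X * Y <= 0.
  by move: X_sign Y_sign opposite; move: (X) (Y) (dd C1) (dd C2) => x y c1 c2; nia.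
have [p [/andP[le_up le_vp] Dp]] := unit_steps_root (unit_steps_dd_take P)
  (leq_addr _ _ : (u <= v)%N) ltac:(by rewrite /= Du Dv).
have le_vP : (v <= size P)%N by rewrite /P catA size_cat (size_cat (B ++ _)) leq_addr.
have : (k < dmax (take p P))%N.
  have := @leq_dmax (take p P) u.
  rewrite take_takel // Du size_takel; last exact: leq_trans le_vP.
  by move/(_ le_up); apply: leq_trans; lia.
by move/(Hk _ (computation_take p HP')); rewrite Dp eqxx.
Qed.

Lemma opposite_cycles_of_repeats (t0 : tr) (P' : seq tr) p1 q1 p2 q2 :
  computation T (t0 :: P') ->
  (p1 < q1 <= p2)%N -> (p2 < q2 <= size (t0 :: P'))%N ->
  state_at t0 (t0 :: P') p1 = state_at t0 (t0 :: P') q1 ->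
  state_at t0 (t0 :: P') p2 = state_at t0 (t0 :: P') q2 ->
  (dd (take q1 (t0 :: P')) - dd (take p1 (t0 :: P'))) *
  (dd (take q2 (t0 :: P')) - dd (take p2 (t0 :: P'))) < 0 ->
  has_opposite_cycles.
Proof.
set P := t0 :: P'; move=> HP /andP[lt_pq1 le_qp] /andP[lt_pq2 le_qP] Est1 Est2 opposite.
have path_P : is_path T P by case/andP: HP.
have take_cat p q : (p <= q)%N -> take q P = take p P ++ drop p (take q P).
  by move=> le_pq; rewrite -{1}(cat_take_drop p (take q P)) take_takel.
have dd_seg p q : (p <= q)%N -> dd (drop p (take q P)) = dd (take q P) - dd (take p P).
  by move=> le_pq; rewrite [in RHS](take_cat p q) // dd_cat addrC addKr.
exists (take p1 P), (drop p1 (take q1 P)), (drop q1 (take p2 P)), (drop p2 (take q2 P)),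
  (drop q2 P).
split.
- by rewrite !catA -take_cat 1?ltnW // -take_cat // -take_cat 1?ltnW // cat_take_drop.
- exact: is_path_take.
- exact/is_path_drop/is_path_take.
- exact: is_path_drop.
split.
- apply: is_cycle_segment => //.
  by rewrite lt_pq1 (leq_trans le_qp) // (leq_trans (ltnW lt_pq2)).
- by apply: is_cycle_segment => //; rewrite lt_pq2.
- by rewrite !dd_seg // ltnW.
Qed.

Lemma zero_computation_opposite_cycles :
  (0 < #|Q|)%N -> zero_computation_beyond #|Q| -> has_opposite_cycles.
Proof.
move=> Q_gt0 [P [HP [Hdmax dP0]]].
have [i le_iP Di] := dmax_attained P.
case: P HP Hdmax dP0 le_iP Di => [|t0 P'] HP Hdmax dP0 le_iP Di.
  by move: Q_gt0 Hdmax; rewrite Di; case: #|Q|.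
set P := t0 :: P' in HP Hdmax dP0 le_iP Di *.
have rise : #|Q|%:Z <= `|dd (take i P) - dd (take 0 P)| by rewrite take0 subr0; lia.
have fall : #|Q|%:Z <= `|dd (take (size P) P) - dd (take i P)|.
  by rewrite take_size dP0 sub0r normrN; lia.
have [p1 [q1 [/andP[_ lt_pq1] le_q1i Est1 sign1]]] :=
  unit_steps_repeat (state_at t0 P) (unit_steps_dd_take P) (leq0n i) rise.
have [p2 [q2 [/andP[le_ip2 lt_pq2] le_q2P Est2 sign2]]] :=
  unit_steps_repeat (state_at t0 P) (unit_steps_dd_take P) le_iP fall.
apply: (@opposite_cycles_of_repeats t0 P' p1 q1 p2 q2) => //.
- by rewrite lt_pq1 (leq_trans le_q1i).
- by rewrite lt_pq2.
- move: sign1 sign2; rewrite take0 subr0 take_size dP0 sub0r.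
  move: (dd (take i P)) (dd (take p1 P)) (dd (take q1 P)) (dd (take p2 P)) (dd (take q2 P)).
  by move=> *; nia.
Qed.

End Paths.

Theorem proposition3 (Q S : finType) (T : transducer Q S) (n : nat)
    (HQ : #|Q| = n) (Hn : (1 <= n)%N) (HI : init T != set0) :
  (~ zero_avoiding T <->
     exists P, computation T P /\ (n <= dmax P)%N /\ dd P = 0) /\
  ((exists P, computation T P /\ (n <= dmax P)%N /\ dd P = 0) <->
     exists B C1 A C2 D : seq (transition Q S),
       [/\ computation T (B ++ C1 ++ A ++ C2 ++ D),
           is_path T B, is_path T A, is_path T D &
           [/\ is_cycle T C1, is_cycle T C2 & dd C1 * dd C2 < 0]]).
Proof.
have one_to_two := @not_zero_avoiding_zero_computation _ _ T n.
have two_to_three : zero_computation_beyond T n -> has_opposite_cycles T.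
  by rewrite -HQ; apply: zero_computation_opposite_cycles; rewrite HQ.
have three_to_one := @opposite_cycles_not_zero_avoiding _ _ T.
split; split.
- exact: one_to_two.
- by move/two_to_three/three_to_one.
- exact: two_to_three.
- by move/three_to_one/one_to_two.
Qed.
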